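(* Let $A\in\mathbb{R}^{d\times n}$ (with $n>d$) have nonzero columns $a_1,\dots,a_n$. Let $x_0\in\mathbb{R}^n$ have support $S_0$ with $|S_0|=m_0$, and let $y_0=Ax_0$. Suppose that the Exact Recovery Condition fails for $S_0$. Suppose further that there is $x_1\in\mathbb{R}^n$ whose support $S_1$ satisfies $S_1\supseteq S_0$, $|S_1|=m_1>m_0$, and that the Exact Recovery Condition holds for $S_1$. Then Orthogonal Matching Pursuit applied to $y_0$ recovers $x_0$ within $m_1$ steps: after at most $m_1$ iterations the residual is zero and the coefficient vector produced by OMP (with entries outside the selected index set set to zero) equals $x_0$.
   Context: For $S\subset\{1,\dots,n\}$, let $A_S$ be the matrix of columns $a_i$, $i\in S$. The Exact Recovery Condition (ERC) holds for $S$ if $A_S$ has full column rank and $\max_{j\notin S}\|A_S^{+}a_j\|_1<1$, where $A_S^{+}$ is the Moore–Penrose pseudoinverse; it fails otherwise. Orthogonal Matching Pursuit (OMP) on a signal $y$: set $r_0=y$, $\Lambda_0=\emptyset$; at iteration $k\ge1$, if $r_{k-1}=0$ stop; otherwise choose $j_k\in\arg\max_j|a_j^Tr_{k-1}|$, set $\Lambda_k=\Lambda_{k-1}\cup\{j_k\}$, let $x^{(k)}$ be the least-squares coefficients minimizing $\|y-A_{\Lambda_k}z\|_2$ over $z$ (supported on $\Lambda_k$, zero elsewhere), and set $r_k=y-Ax^{(k)}$. *)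

From HB Require Import structures.
From mathcomp Require Import all_boot all_order all_algebra.
From mathcomp Require Import reals.
Set Implicit Arguments. Unset Strict Implicit. Unset Printing Implicit Defensive.
Import Order.TTheory GRing.Theory Num.Theory.
Local Open Scope ring_scope.

Section Defs.
Variables (R : realType) (d n : nat).
Implicit Types (A : 'M[R]_(d, n)) (S : {set 'I_n}).

Definition supp (x : 'cV[R]_n) : {set 'I_n} := [set i | x i 0 != 0].

Definition subcols A S : 'M[R]_(d, #|S|) :=
  \matrix_(i < d, k < #|S|) A i (enum_val k).

Definition is_pinv (p q : nat) (M : 'M[R]_(p, q)) (P : 'M[R]_(q, p)) : Prop :=
  [/\ M *m P *m M = M, P *m M *m P = P,
      (M *m P)^T = M *m P & (P *m M)^T = P *m M].

Definition l1norm (q : nat) (v : 'cV[R]_q) : R := \sum_i `|v i 0|.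
Definition l2norm (q : nat) (v : 'cV[R]_q) : R := Num.sqrt (\sum_i v i 0 ^+ 2).

Definition ERC A S : Prop :=
  \rank (subcols A S) = #|S| /\
  forall P : 'M[R]_(#|S|, d), is_pinv (subcols A S) P ->
    forall j : 'I_n, j \notin S -> l1norm (P *m col j A) < 1.

Definition corr A (j : 'I_n) (r : 'cV[R]_d) : R := `|((col j A)^T *m r) 0 0|.

Definition is_LS A (y : 'cV[R]_d) (L : {set 'I_n}) (x : 'cV[R]_n) : Prop :=
  supp x \subset L /\
  forall z : 'cV[R]_n, supp z \subset L -> l2norm (y - A *m x) <= l2norm (y - A *m z).

(* (lam k, xs k) = (Lambda_k, x^(k)) is a run of OMP on y (any tie-breaking and
   any choice of least-squares minimizer); residual r_k = y - A x^(k).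
   Once r_k = 0 the algorithm has stopped and later values are irrelevant. *)
Definition OMP_run A (y : 'cV[R]_d) (lam : nat -> {set 'I_n}) (xs : nat -> 'cV[R]_n)
  : Prop :=
  lam 0%N = set0 /\ xs 0%N = 0 /\
  forall k : nat, y - A *m xs k != 0 ->
    exists j : 'I_n,
      (forall j' : 'I_n, corr A j' (y - A *m xs k) <= corr A j (y - A *m xs k)) /\
      lam k.+1 = j |: lam k /\ is_LS A y (lam k.+1) (xs k.+1).

End Defs.

(* If the ERC holds for S and r = A z with supp z in S, then
   for j outside S, writing r = (A_S^+)^T A_S^T r,
     |a_j^T r| = |(A_S^+ a_j)^T A_S^T r| <= ||A_S^+ a_j||_1 max_(i in S) |a_i^T r|,
   which is strictly below the maximal correlation (positive when r <> 0); so the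
   greedy choice of OMP lies in S.  OMP run on y0 = A x0 has residual
   A (x0 - x^(k)) with x0 - x^(k) supported in S1, and that residual is
   orthogonal to every selected column, so each step adds a new index of S1.
   Hence the residual vanishes within |S1| steps, and then x^(k) - x0 is a kernel
   vector of A supported on S1, which is 0 since A_S1 has full column rank. *)

From HB Require Import structures.
From mathcomp Require Import all_boot all_order all_algebra.
From mathcomp Require Import reals ring lra.
Import Order.TTheory GRing.Theory Num.Theory.
Local Open Scope ring_scope.

Set Implicit Arguments. Unset Strict Implicit.

Section Linear.
Variable R : realType.

Lemma trmx_mul_self (p : nat) (v : 'cV[R]_p) : (v^T *m v) 0 0 = \sum_i v i 0 ^+ 2.
Proof. by rewrite !mxE; apply: eq_bigr => i _; rewrite mxE expr2. Qed.

Lemma trmx_mul_self_eq0 (p : nat) (v : 'cV[R]_p) : (v^T *m v) 0 0 = 0 -> v = 0.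
Proof.
rewrite trmx_mul_self => /psumr_eq0P sum0; apply/matrixP => i j.
rewrite (ord1 j) mxE; apply/eqP; rewrite -sqrf_eq0; apply/eqP.
by apply: sum0 => // k _; apply: sqr_ge0.
Qed.

Lemma gram_unitmx (p q : nat) (M : 'M[R]_(p, q)) :
  \rank M = q -> M^T *m M \in unitmx.
Proof.
move=> rkM; rewrite unitmxE unitfE; apply/negP => /det0P [v v_neq0 vMM0].
have freeMT : row_free M^T by rewrite /row_free mxrank_tr rkM.
have vMT0 : v *m M^T = 0.
  apply: trmx_inj; rewrite trmx0; apply: trmx_mul_self_eq0.
  by rewrite trmxK trmx_mul trmxK mulmxA -(mulmxA v) vMM0 mul0mx mxE.
have v0 : v = 0 by apply: (row_free_inj freeMT); rewrite vMT0 mul0mx.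
by rewrite v0 eqxx in v_neq0.
Qed.

Lemma pinv_exists (p q : nat) (M : 'M[R]_(p, q)) :
  \rank M = q -> exists P, is_pinv M P.
Proof.
move=> /gram_unitmx unitG; exists (invmx (M^T *m M) *m M^T).
have PM1 : invmx (M^T *m M) *m M^T *m M = 1%:M by rewrite -mulmxA mulVmx.
split; first by rewrite -mulmxA PM1 mulmx1.
- by rewrite PM1 mul1mx.
- by rewrite !trmx_mul trmxK trmx_inv trmx_mul trmxK mulmxA.
- by rewrite PM1 trmx1.
Qed.

Lemma pinv_range (p q : nat) (M : 'M[R]_(p, q)) P (c : 'cV[R]_q) :
  is_pinv M P -> M *m c = P^T *m M^T *m (M *m c).
Proof.
case=> MPM _ MP_sym _; rewrite -trmx_mul MP_sym -[M in LHS]MPM.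
by rewrite !mulmxA.
Qed.

Lemma norm_dot_le_l1norm (p : nat) (w g : 'cV[R]_p) (c : R) :
  (forall k, `|g k 0| <= c) -> `|(w^T *m g) 0 0| <= l1norm w * c.
Proof.
move=> g_le; rewrite mxE (le_trans (ler_norm_sum _ _ _)) // /l1norm mulr_suml.
by apply: ler_sum => k _; rewrite mxE normrM ler_wpM2l.
Qed.

Lemma quadratic_nonneg_eq0 (g N : R) :
  0 <= N -> (forall t, 0 <= t ^+ 2 * N - 2 * t * g) -> g = 0.
Proof.
move=> N_ge0 quad_ge0; pose t := g / (N + 1).
have tN1 : t * (N + 1) = g by rewrite mulfVK //; lra.
have := quad_ge0 t; rewrite -tN1 => ge0.
have -> : t = 0 by nra.
by rewrite mul0r.
Qed.

End Linear.

Section Support.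
Variables (R : realType) (d n : nat).
Implicit Types (A : 'M[R]_(d, n)) (S : {set 'I_n}) (x z : 'cV[R]_n).

Lemma supp0 : supp (0 : 'cV[R]_n) = set0.
Proof. by apply/setP => i; rewrite !inE mxE eqxx. Qed.

Lemma suppB x z : supp (x - z) \subset supp x :|: supp z.
Proof.
apply/subsetP => i; rewrite !inE !mxE; apply: contraR.
by rewrite negb_or !negbK => /andP [/eqP -> /eqP ->]; rewrite subrr.
Qed.

Lemma supp_add_delta (x : 'cV[R]_n) i t :
  supp (x + t *: delta_mx i 0) \subset i |: supp x.
Proof.
apply/subsetP => k; rewrite !inE !mxE; case: (eqVneq k i) => //= ki.
by rewrite mulr0 addr0.
Qed.

Definition subvec S z : 'cV[R]_#|S| := \col_(k < #|S|) z (enum_val k) 0.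

Lemma mulmx_subcols A S z :
  supp z \subset S -> A *m z = subcols A S *m subvec S z.
Proof.
move=> /subsetP zS; apply/matrixP => i k; rewrite (ord1 k) !mxE.
rewrite (bigID (mem S)) /= [X in _ + X]big1 ?addr0 => [|l lS]; last first.
  suff -> : z l 0 = 0 by rewrite mulr0.
  by apply/eqP; apply: contraR lS => nz; apply: zS; rewrite inE.
by rewrite big_enum_val /=; apply: eq_bigr => l _; rewrite !mxE.
Qed.

Lemma subvec_eq0 S z : supp z \subset S -> subvec S z = 0 -> z = 0.
Proof.
move=> /subsetP zS z0; apply/matrixP => i j; rewrite (ord1 j) mxE.
case: (boolP (i \in S)) => [iS | iNS].
  have := congr1 (fun v : 'cV[R]_#|S| => v (enum_rank_in iS i) 0) z0.
  by rewrite !mxE enum_rankK_in.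
by apply/eqP; apply: contraR iNS => nz; apply: zS; rewrite inE.
Qed.

Lemma mulmx_supp_eq0 A S z :
  \rank (subcols A S) = #|S| -> supp z \subset S -> A *m z = 0 -> z = 0.
Proof.
move=> rkS zS; rewrite (mulmx_subcols _ zS) => Mz0; apply: subvec_eq0 zS _.
have freeMT : row_free (subcols A S)^T by rewrite /row_free mxrank_tr rkS.
apply: trmx_inj; apply: (row_free_inj freeMT).
by rewrite -trmx_mul Mz0 !trmx0 mul0mx.
Qed.

End Support.

Section LeastSquares.
Variables (R : realType) (d n : nat) (A : 'M[R]_(d, n)).

Lemma sum_sqr_subZ (p : nat) (r a : 'cV[R]_p) t :
  \sum_l (r - t *: a) l 0 ^+ 2 =
  \sum_l r l 0 ^+ 2 + (t ^+ 2 * \sum_l a l 0 ^+ 2 - 2 * t * \sum_l a l 0 * r l 0).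
Proof.
rewrite mulr_sumr mulr_sumr -sumrB -big_split /=.
by apply: eq_bigr => l _; rewrite !mxE; ring.
Qed.

Lemma is_LS_residual_orth y L x i :
  is_LS A y L x -> i \in L -> (col i A)^T *m (y - A *m x) = 0.
Proof.
move=> [xL x_min] iL; set r := y - A *m x; set a := col i A.
have sum_ge0 (p : nat) (v : 'cV[R]_p) : 0 <= \sum_l v l 0 ^+ 2.
  by apply: sumr_ge0 => l _; apply: sqr_ge0.
have quad_ge0 t :
    0 <= t ^+ 2 * \sum_l a l 0 ^+ 2 - 2 * t * \sum_l a l 0 * r l 0.
  have xtL : supp (x + t *: delta_mx i 0) \subset L.
    by rewrite (subset_trans (supp_add_delta x i t)) // subUset sub1set iL.
  have := x_min _ xtL; rewrite /l2norm ler_sqrt // mulmxDr -scalemxAr -colE.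
  by rewrite opprD addrA -/r -/a sum_sqr_subZ lerDl.
have dot0 := quadratic_nonneg_eq0 (sum_ge0 _ a) quad_ge0.
apply/matrixP => u v; rewrite !ord1 !mxE -[RHS]dot0.
by apply: eq_bigr => l _; rewrite !mxE.
Qed.

End LeastSquares.

Section Correlation.
Variables (R : realType) (d n : nat) (A : 'M[R]_(d, n)).

Lemma corr_trmx j r : corr A j r = `|(A^T *m r) j 0|.
Proof. by rewrite /corr !mxE; congr `|_|; apply: eq_bigr => k _; rewrite !mxE. Qed.

Lemma corr_subcols S k r :
  `|((subcols A S)^T *m r) k 0| = corr A (enum_val k) r.
Proof. by rewrite /corr !mxE; congr `|_|; apply: eq_bigr => l _; rewrite !mxE. Qed.

Lemma corr_argmax_gt0 z j :
  A *m z != 0 -> (forall j', corr A j' (A *m z) <= corr A j (A *m z)) ->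
  0 < corr A j (A *m z).
Proof.
move=> Az_neq0 j_max; rewrite lt_def normr_ge0 andbT.
apply: contra_neq Az_neq0 => corr0; apply: trmx_mul_self_eq0.
have ATAz0 : A^T *m (A *m z) = 0.
  apply/matrixP => i k; rewrite ord1 [RHS]mxE; apply: normr0_eq0; apply/le_anti.
  by rewrite normr_ge0 -corr_trmx -corr0 j_max.
by rewrite trmx_mul -mulmxA ATAz0 mulmx0 mxE.
Qed.

Lemma ERC_corr_argmax S z j :
  ERC A S -> supp z \subset S -> A *m z != 0 ->
  (forall j', corr A j' (A *m z) <= corr A j (A *m z)) -> j \in S.
Proof.
move=> [rkS ERC_S] zS Az_neq0 j_max; apply: contraT => jNS.
have [P pinvP] := pinv_exists rkS.
set w := P *m col j A; set M := subcols A S in pinvP.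
have corr_dot : corr A j (A *m z) = `|(w^T *m (M^T *m (A *m z))) 0 0|.
  rewrite /corr {1}(mulmx_subcols _ zS) (pinv_range _ pinvP) -(mulmx_subcols _ zS).
  by rewrite /w trmx_mul !mulmxA.
have := ERC_S P pinvP j jNS; rewrite -/w => w_lt1.
have g_le k : `|(M^T *m (A *m z)) k 0| <= corr A j (A *m z).
  by rewrite corr_subcols j_max.
have := norm_dot_le_l1norm w g_le.
by rewrite -corr_dot leNgt gtr_pMl ?w_lt1 ?(corr_argmax_gt0 Az_neq0 j_max).
Qed.

End Correlation.

Section OMP.
Variables (R : realType) (d n : nat) (A : 'M[R]_(d, n)) (S : {set 'I_n}).
Variables (x0 : 'cV[R]_n) (lam : nat -> {set 'I_n}) (xs : nat -> 'cV[R]_n).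
Hypotheses (ERC_S : ERC A S) (x0S : supp x0 \subset S).
Hypothesis run : OMP_run A (A *m x0) lam xs.

Local Notation r k := (A *m x0 - A *m xs k).

Lemma OMP_invariant k : (forall i, (i < k)%N -> r i != 0) ->
  [/\ lam k \subset S, #|lam k| = k, supp (xs k) \subset lam k &
      forall i, i \in lam k -> (col i A)^T *m r k = 0].
Proof.
have [lam0 [xs0 step]] := run; elim: k => [_ | k IHk r_neq0].
  by rewrite lam0 xs0 supp0 sub0set cards0; split=> // i; rewrite inE.
have [lamS card_lam xs_lam orth] := IHk (fun i ik => r_neq0 i (ltnW ik)).
have [j [j_max [lamS1 LS]]] := step k (r_neq0 k (ltnSn k)).
have diffS : supp (x0 - xs k) \subset S.
  by rewrite (subset_trans (suppB _ _)) // subUset x0S (subset_trans xs_lam).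
have Adiff_neq0 : A *m (x0 - xs k) != 0 by rewrite mulmxBr r_neq0.
rewrite -mulmxBr in j_max.
have jS := ERC_corr_argmax ERC_S diffS Adiff_neq0 j_max.
have jNlam : j \notin lam k.
  apply: contraTN (corr_argmax_gt0 Adiff_neq0 j_max) => jlam.
  by rewrite /corr mulmxBr orth // mxE normr0 ltxx.
rewrite lamS1; split.
- by rewrite subUset sub1set jS lamS.
- by rewrite cardsU1 jNlam card_lam.
- by rewrite -lamS1; case: LS.
- by rewrite -lamS1 => i; apply: is_LS_residual_orth LS.
Qed.

Lemma OMP_residual_vanishes : exists2 k, (k <= #|S|)%N & r k = 0.
Proof.
case: (boolP [exists i : 'I_#|S|.+1, r i == 0]) => [/existsP [i /eqP ri0] |].
  by exists i; rewrite // -ltnS ltn_ord.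
rewrite negb_exists => /forallP r_neq0.
have [lamS card_lam _ _] := OMP_invariant (fun i ik => r_neq0 (Ordinal ik)).
by have := subset_leq_card lamS; rewrite card_lam ltnn.
Qed.

Lemma OMP_recovers : exists k,
  [/\ (k <= #|S|)%N, r k = 0, forall i, (i < k)%N -> r i != 0 & xs k = x0].
Proof.
have [k0 k0S rk00] := OMP_residual_vanishes.
have [|k /eqP rk0 k_min] := ex_minnP (P := fun k => r k == 0); first by exists k0; apply/eqP.
have r_neq0 i : (i < k)%N -> r i != 0.
  by apply: contraTN => /k_min; rewrite -leqNgt.
have [lamS _ xs_lam _] := OMP_invariant r_neq0.
exists k; split => //; first by apply: leq_trans (k_min k0 _) k0S; apply/eqP.
apply/eqP; rewrite -subr_eq0; apply/eqP; apply: (mulmx_supp_eq0 ERC_S.1).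
  by rewrite (subset_trans (suppB _ _)) // subUset x0S (subset_trans xs_lam).
by rewrite mulmxBr -opprB rk0 oppr0.
Qed.

End OMP.

Unset Implicit Arguments. Set Strict Implicit.

Theorem theorem10 (R : realType) (d n : nat) (A : 'M[R]_(d, n))
  (x0 x1 : 'cV[R]_n) :
  (d < n)%N ->
  (forall j : 'I_n, col j A != 0) ->
  ~ ERC A (supp x0) ->
  supp x0 \subset supp x1 ->
  (#|supp x0| < #|supp x1|)%N ->
  ERC A (supp x1) ->
  forall (lam : nat -> {set 'I_n}) (xs : nat -> 'cV[R]_n),
    OMP_run A (A *m x0) lam xs ->
    exists k : nat,
      [/\ (k <= #|supp x1|)%N,
          A *m x0 - A *m xs k = 0,
          (forall i : nat, (i < k)%N -> A *m x0 - A *m xs i != 0)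
        & xs k = x0].
Proof.
move=> _ _ _ x0_x1 _ ERC_x1 lam xs run.
exact: OMP_recovers ERC_x1 x0_x1 run.
Qed.
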